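(* For any 2-CNF $\Phi$, the pruned 2-CNF $\hat\Phi$ is satisfiable.
   Context: A 2-CNF is a conjunction of clauses, each clause being the disjunction of two literals on two distinct variables. A clause $l\vee\neg l'$ is read as the implication $l'\to l$. For a 2-CNF $\Phi$ and a set $\mathcal L_0$ of literals, define $\mathcal L(\Phi,\mathcal L_0)$ as the output of Unit Clause Propagation: start with $\mathcal L=\mathcal L_0$ and, as long as $\Phi$ contains a clause $l\vee\neg l'$ with $l'\in\mathcal L$ and $l\notin\mathcal L$, add $l$ to $\mathcal L$. Let $\mathcal V_0(\Phi,\mathcal L_0)$ be the set of variables $x$ with both $x,\neg x\in\mathcal L(\Phi,\mathcal L_0)$. The set of conflict clauses $\mathcal C(\Phi,\mathcal L_0)$ is the set of clauses $a$ of $\Phi$ all of whose variables lie in $\mathcal V_0(\Phi,\mathcal L_0)$. The pruned formula $\hat\Phi$ is obtained from $\Phi$ by deleting all clauses in $\bigcup_l\mathcal C(\Phi,\{l\})$, where the union ranges over all literals $l\in\{x,\neg x\}$ with $x$ a variable of $\Phi$. *)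

From Stdlib Require Import List.
Import ListNotations.

Inductive lit : Type := Pos (x : nat) | Neg (x : nat).

Definition var (l : lit) : nat := match l with Pos x => x | Neg x => x end.
Definition neg (l : lit) : lit := match l with Pos x => Neg x | Neg x => Pos x end.

Definition clause : Type := (lit * lit)%type.
Definition cnf : Type := list clause.

Definition is_2cnf (Phi : cnf) : Prop :=
  forall c, In c Phi -> var (fst c) <> var (snd c).

Definition clause_vars (c : clause) : list nat := [var (fst c); var (snd c)].

Definition var_of (Phi : cnf) (x : nat) : Prop :=
  exists c, In c Phi /\ In x (clause_vars c).

(* Output of Unit Clause Propagation L(Phi, L0): the least set containing L0
   and closed under: for a clause l \/ ~l' of Phi with l' in L, add l.
   A clause (a, b) = a \/ b can be written l \/ ~l' in two ways:
   l = a, l' = neg b, or l = b, l' = neg a. *)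
Inductive ucp (Phi : cnf) (L0 : lit -> Prop) : lit -> Prop :=
| ucp_init : forall l, L0 l -> ucp Phi L0 l
| ucp_left : forall a b, In (a, b) Phi -> ucp Phi L0 (neg b) -> ucp Phi L0 a
| ucp_right : forall a b, In (a, b) Phi -> ucp Phi L0 (neg a) -> ucp Phi L0 b.

Definition V0 (Phi : cnf) (L0 : lit -> Prop) (x : nat) : Prop :=
  ucp Phi L0 (Pos x) /\ ucp Phi L0 (Neg x).

Definition conflict_clause (Phi : cnf) (L0 : lit -> Prop) (c : clause) : Prop :=
  In c Phi /\ forall x, In x (clause_vars c) -> V0 Phi L0 x.

Definition pruned_away (Phi : cnf) (c : clause) : Prop :=
  exists l, var_of Phi (var l) /\ conflict_clause Phi (fun l' => l' = l) c.

(* Clauses of the pruned formula \hat Phi. *)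
Definition in_pruned (Phi : cnf) (c : clause) : Prop :=
  In c Phi /\ ~ pruned_away Phi c.

Definition lit_true (s : nat -> bool) (l : lit) : bool :=
  match l with Pos x => s x | Neg x => negb (s x) end.
Definition clause_true (s : nat -> bool) (c : clause) : Prop :=
  lit_true s (fst c) = true \/ lit_true s (snd c) = true.

Definition satisfiable (F : clause -> Prop) : Prop :=
  exists s : nat -> bool, forall c, F c -> clause_true s c.

From Stdlib Require Import List Classical ClassicalEpsilon Wf_nat Lia.

(* In the pruned formula no literal propagates to its own negation: the last
   clause [~l \/ b] of a propagation from [l] to [~l] has [l], [~l], [b] and
   [~b] all in L(Phi, {l}), so it is a conflict clause of C(Phi, {l}) and has
   been deleted.  A 2-CNF in which no literal propagates to its negation is
   satisfiable: the propagation closure of any literal is then consistent, so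
   making it true satisfies every clause it touches and leaves the remaining
   clauses, a smaller formula with the same property, untouched. *)

Lemma neg_involutive (l : lit) : neg (neg l) = l.
Proof. destruct l; reflexivity. Qed.

Lemma var_neg (l : lit) : var (neg l) = var l.
Proof. destruct l; reflexivity. Qed.

Lemma neg_neq (l : lit) : neg l <> l.
Proof. destruct l; discriminate. Qed.

Definition holds (P : Prop) : bool :=
  if excluded_middle_informative P then true else false.

Lemma holdsP (P : Prop) : reflect P (holds P).
Proof. unfold holds; destruct (excluded_middle_informative P); constructor; assumption. Qed.

Lemma filter_length_lt {A : Type} (f : A -> bool) (l : list A) (x : A) :
  In x l -> f x = false -> length (filter f l) < length l.
Proof.
  intros Hx Hfx.
  enough (length (filter f l) <> length l) by (pose proof (filter_length_le f l); lia).
  intro Heq; apply filter_length_forallb, forallb_forall with (x := x) in Heq; [|exact Hx].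
  congruence.
Qed.

Local Notation reaches F a b := (ucp F (fun l' => l' = a) b).

Lemma ucp_incl (F F' : cnf) (L : lit -> Prop) (k : lit) :
  incl F' F -> ucp F' L k -> ucp F L k.
Proof.
  intros HF H; induction H.
  - now apply ucp_init.
  - eapply ucp_left; eauto.
  - eapply ucp_right; eauto.
Qed.

Lemma ucp_trans (F : cnf) (L : lit -> Prop) (a b : lit) :
  ucp F L a -> reaches F a b -> ucp F L b.
Proof.
  intros Ha H; induction H.
  - now subst.
  - eapply ucp_left; eauto.
  - eapply ucp_right; eauto.
Qed.

Lemma reaches_contrapose (F : cnf) (a b : lit) :
  reaches F a b -> reaches F (neg b) (neg a).
Proof.
  intros H; induction H as [l Hl | a' b' Hab _ IH | a' b' Hab _ IH].
  - subst; now apply ucp_init.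
  - rewrite neg_involutive in IH.
    apply ucp_trans with b'; [|exact IH].
    eapply ucp_right; [exact Hab | now apply ucp_init].
  - rewrite neg_involutive in IH.
    apply ucp_trans with a'; [|exact IH].
    eapply ucp_left; [exact Hab | now apply ucp_init].
Qed.

Lemma reaches_consistent (F : cnf) (m k : lit) :
  ~ reaches F m (neg m) -> reaches F m k -> ~ reaches F m (neg k).
Proof.
  intros Hm Hk Hnk; apply Hm.
  apply ucp_trans with k; [exact Hk|].
  pose proof (reaches_contrapose _ _ _ Hnk) as Hkm.
  now rewrite neg_involutive in Hkm.
Qed.

Definition override (R : lit -> Prop) (s : nat -> bool) (x : nat) : bool :=
  if holds (R (Pos x)) then true else if holds (R (Neg x)) then false else s x.

Lemma override_true (R : lit -> Prop) (s : nat -> bool) (k : lit) :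
  (forall k', R k' -> ~ R (neg k')) -> R k -> lit_true (override R s) k = true.
Proof.
  intros Hcons Hk; destruct k as [x | x]; simpl; unfold override.
  - now destruct (holdsP (R (Pos x))).
  - destruct (holdsP (R (Pos x))) as [Hx | _]; [exfalso; exact (Hcons _ Hk Hx)|].
    now destruct (holdsP (R (Neg x))).
Qed.

Lemma override_untouched (R : lit -> Prop) (s : nat -> bool) (k : lit) :
  ~ R k -> ~ R (neg k) -> lit_true (override R s) k = lit_true s k.
Proof.
  intros Hk Hnk; destruct k as [x | x]; simpl in *; unfold override;
    destruct (holdsP (R (Pos x))); destruct (holdsP (R (Neg x))); tauto.
Qed.

(* A consistent propagation closure is an autarky. *)
Lemma override_ucp_sat (F : cnf) (L : lit -> Prop) (s : nat -> bool) :
  (forall k, ucp F L k -> ~ ucp F L (neg k)) ->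
  (forall c, In c F -> ~ ucp F L (fst c) -> ~ ucp F L (snd c) -> clause_true s c) ->
  forall c, In c F -> clause_true (override (ucp F L) s) c.
Proof.
  intros Hcons Hs [a b] Hab.
  destruct (classic (ucp F L a)) as [Ha | Ha]; [left; now apply override_true|].
  destruct (classic (ucp F L b)) as [Hb | Hb]; [right; now apply override_true|].
  destruct (Hs _ Hab Ha Hb) as [Hsa | Hsb]; simpl in *; [left | right].
  - rewrite override_untouched; [exact Hsa | exact Ha |].
    intro Hna; apply Hb; eapply ucp_right; eauto.
  - rewrite override_untouched; [exact Hsb | exact Hb |].
    intro Hnb; apply Ha; eapply ucp_left; eauto.
Qed.

Definition untouched (F : cnf) (R : lit -> Prop) : cnf :=
  filter (fun c => holds (~ R (fst c) /\ ~ R (snd c))) F.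

Lemma In_untouched (F : cnf) (R : lit -> Prop) (c : clause) :
  In c (untouched F R) <-> In c F /\ ~ R (fst c) /\ ~ R (snd c).
Proof.
  unfold untouched; rewrite filter_In.
  destruct (holdsP (~ R (fst c) /\ ~ R (snd c))); intuition discriminate.
Qed.

Lemma sat_of_no_self_refutation (F : cnf) :
  (forall l, ~ reaches F l (neg l)) -> exists s, forall c, In c F -> clause_true s c.
Proof.
  induction F as [F IH] using (induction_ltof1 _ (@length clause)).
  intros Hno.
  destruct F as [| c0 rest]; [exists (fun _ => true); intros c []|].
  set (F := c0 :: rest) in *.
  set (R := ucp F (fun l' => l' = fst c0)).
  assert (Hc0 : In c0 F) by now left.
  assert (HR0 : R (fst c0)) by (now apply ucp_init).
  destruct (IH (untouched F R)) as [s Hs].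
  - unfold ltof, untouched. apply filter_length_lt with c0; [exact Hc0|].
    destruct (holdsP (~ R (fst c0) /\ ~ R (snd c0))); tauto.
  - intros l Hl; apply (Hno l).
    eapply ucp_incl; [apply incl_filter | exact Hl].
  - exists (override R s).
    apply override_ucp_sat.
    + intro k; now apply reaches_consistent.
    + intros c Hc Ha Hb; apply Hs, In_untouched; auto.
Qed.

Lemma conflict_clause_intro (Phi : cnf) (L : lit -> Prop) (a b : lit) :
  In (a, b) Phi -> ucp Phi L a -> ucp Phi L (neg a) -> ucp Phi L b -> ucp Phi L (neg b) ->
  conflict_clause Phi L (a, b).
Proof.
  intros Hab Ha Hna Hb Hnb; split; [exact Hab|].
  assert (HV0 : forall k, ucp Phi L k -> ucp Phi L (neg k) -> V0 Phi L (var k))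
    by (intros [x | x] Hk Hnk; split; assumption).
  intros x [Hx | [Hx | []]]; subst x; auto.
Qed.

Lemma self_refutation_uses_pruned_clause (Phi F : cnf) (l : lit) :
  incl F Phi -> reaches F l (neg l) -> exists c, In c F /\ pruned_away Phi c.
Proof.
  intros HF H.
  assert (Hl : reaches Phi l l) by (now apply ucp_init).
  assert (Hnl : reaches Phi l (neg l)) by (eapply ucp_incl; eauto).
  inversion H as [? Hinit | a b Hab Hnb | a b Hab Hna]; subst.
  - exfalso; exact (neg_neq l Hinit).
  - exists (neg l, b); split; [exact Hab|].
    exists l; split.
    + exists (neg l, b); split; [now apply HF | left; apply var_neg].
    + apply conflict_clause_intro; rewrite ?neg_involutive; [now apply HF | exact Hnl | exact Hl | |].
      * apply ucp_right with (neg l); [now apply HF | now rewrite neg_involutive].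
      * eapply ucp_incl; eauto.
  - exists (a, neg l); split; [exact Hab|].
    exists l; split.
    + exists (a, neg l); split; [now apply HF | right; left; apply var_neg].
    + apply conflict_clause_intro; rewrite ?neg_involutive; [now apply HF | | | exact Hnl | exact Hl].
      * apply ucp_left with (neg l); [now apply HF | now rewrite neg_involutive].
      * eapply ucp_incl; eauto.
Qed.

Definition pruned_list (Phi : cnf) : cnf :=
  filter (fun c => negb (holds (pruned_away Phi c))) Phi.

Lemma In_pruned_list (Phi : cnf) (c : clause) :
  In c (pruned_list Phi) <-> in_pruned Phi c.
Proof.
  unfold pruned_list, in_pruned; rewrite filter_In.
  destruct (holdsP (pruned_away Phi c)); intuition discriminate.
Qed.

Theorem fact2p2 : forall Phi : cnf, is_2cnf Phi -> satisfiable (in_pruned Phi).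
Proof.
  intros Phi _.
  destruct (sat_of_no_self_refutation (pruned_list Phi)) as [s Hs].
  - intros l Hl.
    destruct (self_refutation_uses_pruned_clause Phi _ l (incl_filter _ _) Hl)
      as [c [Hc Hpruned]].
    apply In_pruned_list in Hc.
    exact (proj2 Hc Hpruned).
  - exists s; intros c Hc; now apply Hs, In_pruned_list.
Qed.
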